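(* Let $M$ be a magma satisfying $xy = xz$ and $(xy)z = xy$ for all $x,y,z\in M$. Then $M$ satisfies $xy = zu$ for all $x,y,z,u\in M$ if and only if $M$ avoids the magma $2_{LZ}$ on $\{0,1\}$ with Cayley table \[ \begin{array}{c|cc} 2_{LZ} & 0 & 1 \\ \hline 0 & 0 & 0 \\ 1 & 1 & 1 \end{array}. \]
   Context: A magma is a nonempty set with a binary operation, written by juxtaposition. A magma $M$ avoids a magma $F$ if no submagma of $M$ is isomorphic to $F$. *)

From Stdlib Require Import Bool.

Record magma := Magma {
  carrier :> Type;
  mop : carrier -> carrier -> carrier;
  inhabited_carrier : inhabited carrier
}.

Definition is_submagma (M : magma) (S : M -> Prop) : Prop :=
  (exists x, S x) /\ (forall x y, S x -> S y -> S (mop M x y)).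

Definition submagma_iso (F M : magma) (S : M -> Prop) : Prop :=
  exists f : F -> M,
    (forall a, S (f a)) /\
    (forall a b, f a = f b -> a = b) /\
    (forall y, S y -> exists a, f a = y) /\
    (forall a b, f (mop F a b) = mop M (f a) (f b)).

Definition avoids (M F : magma) : Prop :=
  ~ exists S : M -> Prop, is_submagma M S /\ submagma_iso F M S.

(* The left-zero magma on {0,1} (here bool, false = 0, true = 1): x y = x. *)
Definition magma_2LZ : magma := Magma bool (fun x _ => x) (inhabits false).

(* Every product is a left zero, since (xy)z = xy.  If all products coincide, a
   copy of 2_LZ is impossible because its two products 00 = 0 and 11 = 1 differ;
   otherwise two distinct products a and b are left zeros, and {a, b} is a copy
   of 2_LZ. *)

From Stdlib Require Import Classical.

Definition left_zero (M : magma) (a : M) : Prop := forall z : M, mop M a z = a.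

Lemma avoids_2LZ_of_constant_mop (M : magma) :
  (forall x y z u : M, mop M x y = mop M z u) -> avoids M magma_2LZ.
Proof.
  intros Hconst [S [_ [f [_ [Hinj [_ Hhom]]]]]].
  assert (Hf : f false = f true).
  { change (f (mop magma_2LZ false true) = f (mop magma_2LZ true false)).
    rewrite !Hhom. apply Hconst. }
  discriminate (Hinj _ _ Hf).
Qed.

Lemma left_zero_pair_iso_2LZ (M : magma) (a b : M) :
  left_zero M a -> left_zero M b -> a <> b ->
  let S := fun w => w = a \/ w = b in
  is_submagma M S /\ submagma_iso magma_2LZ M S.
Proof.
  intros Ha Hb Hab S. split.
  - split.
    + exists a. now left.
    + intros p q [-> | ->] _; [left; apply Ha | right; apply Hb].
  - exists (fun t : bool => if t then b else a). repeat split.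
    + intros [|]; [now right | now left].
    + intros [|] [|] E; congruence.
    + intros w [-> | ->]; [exists false | exists true]; reflexivity.
    + intros [|] c; simpl; symmetry; [apply Hb | apply Ha].
Qed.

Theorem mainTheorem3 (M : magma) :
  (forall x y z : M, mop M x y = mop M x z) ->
  (forall x y z : M, mop M (mop M x y) z = mop M x y) ->
  ((forall x y z u : M, mop M x y = mop M z u) <-> avoids M magma_2LZ).
Proof.
  intros _ Hleft. split.
  - apply avoids_2LZ_of_constant_mop.
  - intros Havoid x y z u. apply NNPP. intros Hne. apply Havoid.
    exists (fun w => w = mop M x y \/ w = mop M z u).
    apply left_zero_pair_iso_2LZ; [intros w; apply Hleft .. | exact Hne].
Qed.
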